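(* Let $c_v>\frac12$, let $\varrho_\pm,p_\pm>0$, $v_\pm\in\mathbb{R}$ be Riemann data (for the one-dimensional full Euler system in the variable $x_2$, with states $(\varrho_-,v_-,p_-)$ for $x_2<0$ and $(\varrho_+,v_+,p_+)$ for $x_2>0$) whose 1D Riemann solution consists of a 1-shock, possibly a 2-contact discontinuity, and a 3-shock, with intermediate states $(\varrho_{M-},v_M,p_M)$, $(\varrho_{M+},v_M,p_M)$ and shock speeds $\sigma_-,\sigma_+$, and assume $v_M=0$. Define for $\varepsilon\in\mathbb{R}$ $A(\varepsilon)=\varrho_-(\varrho_{M-}+\varepsilon)(\varrho_{M+}-\varepsilon-\varrho_+)-\varrho_+(\varrho_{M+}-\varepsilon)(\varrho_{M-}+\varepsilon-\varrho_-)$, $B(\varepsilon)=\varrho_-\varrho_+(\varrho_{M-}+\varepsilon)(\varrho_{M+}-\varepsilon)(v_--v_+)^2-(p_--p_+)A(\varepsilon)$, $D(\varepsilon)=v_-\varrho_-(\varrho_{M-}+\varepsilon)(\varrho_{M+}-\varepsilon-\varrho_+)-v_+\varrho_+(\varrho_{M+}-\varepsilon)(\varrho_{M-}+\varepsilon-\varrho_-)$, let $\varepsilon_{\max}>0$ be such that $A(\varepsilon)\ne0$, $B(\varepsilon)>0$, $\varrho_{M+}-\varepsilon-\varrho_+>0$ and $\varrho_{M-}+\varepsilon-\varrho_->0$ for all $\varepsilon\in(0,\varepsilon_{\max}]$, and for $\varepsilon\in(0,\varepsilon_{\max}]$ define $\mu_0(\varepsilon)=\frac{1}{A(\varepsilon)}\Big[D(\varepsilon)+\varrho_-\varrho_+(\varrho_{M+}-\varepsilon)(v_--v_+)-\sqrt{(\varrho_{M-}+\varepsilon)^2\frac{\varrho_{M+}-\varepsilon-\varrho_+}{\varrho_{M-}+\varepsilon-\varrho_-}B(\varepsilon)}\Big]$,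 $\mu_1(\varepsilon)=\frac{1}{A(\varepsilon)}\Big[D(\varepsilon)-\sqrt{(\varrho_{M-}+\varepsilon-\varrho_-)(\varrho_{M+}-\varepsilon-\varrho_+)B(\varepsilon)}\Big]$, $\mu_2(\varepsilon)=\frac{1}{A(\varepsilon)}\Big[D(\varepsilon)+\varrho_-\varrho_+(\varrho_{M-}+\varepsilon)(v_--v_+)-\sqrt{(\varrho_{M+}-\varepsilon)^2\frac{\varrho_{M-}+\varepsilon-\varrho_-}{\varrho_{M+}-\varepsilon-\varrho_+}B(\varepsilon)}\Big]$. Then $\lim_{\varepsilon\to0}\mu_0(\varepsilon)=\sigma_-$, $\lim_{\varepsilon\to0}\mu_1(\varepsilon)=v_M$ and $\lim_{\varepsilon\to0}\mu_2(\varepsilon)=\sigma_+$.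
   Context: The one-dimensional full Euler system for an ideal gas is $\partial_t\varrho+\partial_2(\varrho v)=0$, $\partial_t(\varrho v)+\partial_2(\varrho v^2+p)=0$, $\partial_t(\frac12\varrho v^2+c_vp)+\partial_2[(\frac12\varrho v^2+(c_v+1)p)v]=0$. The 1D Riemann solution is its unique self-similar BV solution with the given Riemann data, consisting of a 1-wave, a (possibly absent) 2-contact discontinuity traveling with speed $v_M$, and a 3-wave, separated by constant states. In the case considered the 1-wave is an admissible shock connecting $(\varrho_-,v_-,p_-)$ to $(\varrho_{M-},v_M,p_M)$ with speed $\sigma_-$, and the 3-wave an admissible shock connecting $(\varrho_{M+},v_M,p_M)$ to $(\varrho_+,v_+,p_+)$ with speed $\sigma_+$; the Rankine–Hugoniot conditions hold, in particular $\sigma_\pm(\varrho_\pm-\varrho_{M\pm})=\varrho_\pm v_\pm-\varrho_{M\pm}v_M$. It is known that $p_M>\max\{p_-,p_+\}$, $\varrho_{M\pm}>\varrho_\pm$. The paper shows such an $\varepsilon_{\max}$ exists. *)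

From Stdlib Require Import Reals Lra.
From Coquelicot Require Import Coquelicot.
Open Scope R_scope.

Definition gamma_cv (cv : R) : R := (cv + 1) / cv.
Definition sound (cv rho p : R) : R := sqrt (gamma_cv cv * p / rho).

Definition cons_mass (rho v p : R) : R := rho.
Definition cons_mom (rho v p : R) : R := rho * v.
Definition cons_en (cv rho v p : R) : R := /2 * rho * v ^ 2 + cv * p.
Definition flux_mass (rho v p : R) : R := rho * v.
Definition flux_mom (rho v p : R) : R := rho * v ^ 2 + p.
Definition flux_en (cv rho v p : R) : R := (/2 * rho * v ^ 2 + (cv + 1) * p) * v.

Definition rankine_hugoniot (cv sigma ra va pa rb vb pb : R) : Prop :=
  sigma * (cons_mass ra va pa - cons_mass rb vb pb) = flux_mass ra va pa - flux_mass rb vb pb /\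
  sigma * (cons_mom ra va pa - cons_mom rb vb pb) = flux_mom ra va pa - flux_mom rb vb pb /\
  sigma * (cons_en cv ra va pa - cons_en cv rb vb pb) = flux_en cv ra va pa - flux_en cv rb vb pb.

Definition admissible_1shock (cv sigma rl vl pl rr vr pr : R) : Prop :=
  rankine_hugoniot cv sigma rl vl pl rr vr pr /\
  vr - sound cv rr pr < sigma < vl - sound cv rl pl.

Definition admissible_3shock (cv sigma rl vl pl rr vr pr : R) : Prop :=
  rankine_hugoniot cv sigma rl vl pl rr vr pr /\
  vr + sound cv rr pr < sigma < vl + sound cv rl pl.

Section Mus.
Variables (rm vm pm rp vp pp rMm rMp : R).
(* rm = rho_-, vm = v_-, pm = p_-, rp = rho_+, ..., rMm = rho_{M-}, rMp = rho_{M+} *)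

Definition A_eps (e : R) : R :=
  rm * (rMm + e) * (rMp - e - rp) - rp * (rMp - e) * (rMm + e - rm).

Definition B_eps (e : R) : R :=
  rm * rp * (rMm + e) * (rMp - e) * (vm - vp) ^ 2 - (pm - pp) * A_eps e.

Definition D_eps (e : R) : R :=
  vm * rm * (rMm + e) * (rMp - e - rp) - vp * rp * (rMp - e) * (rMm + e - rm).

Definition mu0 (e : R) : R :=
  / A_eps e * (D_eps e + rm * rp * (rMp - e) * (vm - vp)
    - sqrt ((rMm + e) ^ 2 * ((rMp - e - rp) / (rMm + e - rm)) * B_eps e)).

Definition mu1 (e : R) : R :=
  / A_eps e * (D_eps e - sqrt ((rMm + e - rm) * (rMp - e - rp) * B_eps e)).

Definition mu2 (e : R) : R :=
  / A_eps e * (D_eps e + rm * rp * (rMm + e) * (vm - vp)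
    - sqrt ((rMp - e) ^ 2 * ((rMm + e - rm) / (rMp - e - rp)) * B_eps e)).
End Mus.

(* Rationalizing the numerator, mu1 = C / (D + sqrt (a b B)) with
   a = rho_{M-} + e - rho_-, b = rho_{M+} - e - rho_+ and C a polynomial in e,
   because D^2 - a b B = A C; this removes the factor 1/A, and A(0) may vanish.
   The other two roots are affine in mu1:
   mu0 = (- rho_- v_- + (rho_{M-} + e) mu1) / a and
   mu2 = (- rho_+ v_+ + (rho_{M+} - e) mu1) / b.
   For shocks into the resting middle state, the Rankine-Hugoniot conditions give
   sigma_- = - rho_- v_- / (rho_{M-} - rho_-), sigma_+ = - rho_+ v_+ / (rho_{M+} - rho_+)
   and the pressure jumps that make C(0) = 0, while D(0) > 0 because v_- > 0 > v_+. *)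

From Stdlib Require Import Reals Lra.
From Coquelicot Require Import Coquelicot.
Open Scope R_scope.

Lemma rationalize_sub_sqrt (a f q c : R) :
  a <> 0 -> 0 <= q -> f ^ 2 - q = a * c -> 0 < f + sqrt q ->
  / a * (f - sqrt q) = c / (f + sqrt q).
Proof.
  intros Ha Hq Hfqc Hden.
  replace c with ((f ^ 2 - q) / a) by (rewrite Hfqc; field; exact Ha).
  set (s := sqrt q) in *.
  assert (Hs : s * s = q) by exact (sqrt_sqrt q Hq).
  rewrite <- Hs. field. split; lra.
Qed.

Lemma continuous_pos_locally (f : R -> R) (x : R) :
  continuous f x -> 0 < f x -> locally x (fun y => 0 < f y).
Proof. intros Hf Hpos. apply Hf. exact (open_gt 0 (f x) Hpos). Qed.

Lemma filterlim_at_right_continuous (f g : R -> R) (x l : R) :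
  at_right x (fun e => g e = f e) -> continuous g x -> g x = l ->
  filterlim f (at_right x) (locally l).
Proof.
  intros Hfg Hg <-.
  apply (filterlim_ext_loc g f Hfg).
  exact (filterlim_filter_le_1 g (filter_le_within _) Hg).
Qed.

Lemma at_right_le (x y : R) : x < y -> at_right x (fun e => x < e <= y).
Proof.
  intros Hxy. unfold at_right, within.
  apply (filter_imp (fun e => e < y)).
  - intros e Hey Hxe. lra.
  - exact (open_lt y x Hxy).
Qed.

Lemma admissible_1shock_to_rest (cv s rl vl pl rr pr : R) :
  0 < rl < rr -> admissible_1shock cv s rl vl pl rr 0 pr ->
  0 < vl /\ s = - rl * vl / (rr - rl) /\ pr - pl = rl * rr * vl ^ 2 / (rr - rl).
Proof.
  intros Hr [[Hmass [Hmom _]] [_ Hlax]].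
  unfold cons_mass, cons_mom, flux_mass, flux_mom in Hmass, Hmom.
  pose proof (sqrt_pos (gamma_cv cv * pl / rl)) as Hsound.
  unfold sound in Hlax.
  assert (Hs : s = - rl * vl / (rr - rl)).
  { replace (- rl * vl) with (s * (rr - rl)) by lra. field. lra. }
  split; [|split]; [nra | exact Hs |].
  replace (pr - pl) with (rl * vl ^ 2 - s * rl * vl) by lra.
  rewrite Hs. field. lra.
Qed.

Lemma admissible_3shock_from_rest (cv s rl pl rr vr pr : R) :
  0 < rr < rl -> admissible_3shock cv s rl 0 pl rr vr pr ->
  vr < 0 /\ s = - rr * vr / (rl - rr) /\ pl - pr = rl * rr * vr ^ 2 / (rl - rr).
Proof.
  intros Hr [[Hmass [Hmom _]] [Hlax _]].
  unfold cons_mass, cons_mom, flux_mass, flux_mom in Hmass, Hmom.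
  pose proof (sqrt_pos (gamma_cv cv * pr / rr)) as Hsound.
  unfold sound in Hlax.
  assert (Hs : s = - rr * vr / (rl - rr)).
  { replace (- rr * vr) with (s * (rl - rr)) by lra. field. lra. }
  split; [|split]; [nra | exact Hs |].
  replace (pl - pr) with (rr * vr ^ 2 - s * rr * vr) by lra.
  rewrite Hs. field. lra.
Qed.

Local Ltac continuous_by_auto_derive :=
  apply (ex_derive_continuous (K := R_AbsRing) (V := R_NormedModule)); auto_derive.

Section Rationalization.
Variables (rm vm pm rp vp pp rMm rMp : R).

Local Notation A := (A_eps rm rp rMm rMp).
Local Notation B := (B_eps rm vm pm rp vp pp rMm rMp).
Local Notation D := (D_eps rm vm rp vp rMm rMp).

Definition C_eps (e : R) : R :=
  vm ^ 2 * rm * (rMm + e) * (rMp - e - rp) - vp ^ 2 * rp * (rMp - e) * (rMm + e - rm)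
  + (rMm + e - rm) * (rMp - e - rp) * (pm - pp).

Definition mu1_den (e : R) : R :=
  D e + sqrt ((rMm + e - rm) * (rMp - e - rp) * B e).

Definition mu1_rat (e : R) : R := C_eps e / mu1_den e.

Lemma D_eps_sqr_sub (e : R) :
  D e ^ 2 - (rMm + e - rm) * (rMp - e - rp) * B e = A e * C_eps e.
Proof. unfold B_eps, A_eps, D_eps, C_eps. ring. Qed.

Lemma mu1_eq_rat (e : R) :
  A e <> 0 -> 0 <= (rMm + e - rm) * (rMp - e - rp) * B e -> 0 < mu1_den e ->
  mu1 rm vm pm rp vp pp rMm rMp e = mu1_rat e.
Proof.
  intros HA HQ Hden.
  apply rationalize_sub_sqrt; [exact HA | exact HQ | apply D_eps_sqr_sub | exact Hden].
Qed.

Lemma mu0_eq_mu1 (e : R) :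
  A e <> 0 -> 0 <= rm -> rm < rMm + e ->
  mu0 rm vm pm rp vp pp rMm rMp e
  = - rm * vm / (rMm + e - rm) + (rMm + e) / (rMm + e - rm) * mu1 rm vm pm rp vp pp rMm rMp e.
Proof.
  intros HA Hrm Ha.
  assert (Hk : 0 <= (rMm + e) / (rMm + e - rm)) by (apply Rdiv_le_0_compat; lra).
  assert (Hsqrt : sqrt ((rMm + e) ^ 2 * ((rMp - e - rp) / (rMm + e - rm)) * B e)
                  = (rMm + e) / (rMm + e - rm) * sqrt ((rMm + e - rm) * (rMp - e - rp) * B e)).
  { rewrite <- (sqrt_pow2 _ Hk). rewrite <- sqrt_mult_alt by apply pow2_ge_0.
    f_equal. field. lra. }
  unfold mu0, mu1. rewrite Hsqrt.
  unfold A_eps in HA |- *. unfold D_eps. field. split; [exact HA | lra].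
Qed.

Lemma mu2_eq_mu1 (e : R) :
  A e <> 0 -> 0 <= rp -> rp < rMp - e ->
  mu2 rm vm pm rp vp pp rMm rMp e
  = - rp * vp / (rMp - e - rp) + (rMp - e) / (rMp - e - rp) * mu1 rm vm pm rp vp pp rMm rMp e.
Proof.
  intros HA Hrp Hb.
  assert (Hk : 0 <= (rMp - e) / (rMp - e - rp)) by (apply Rdiv_le_0_compat; lra).
  assert (Hsqrt : sqrt ((rMp - e) ^ 2 * ((rMm + e - rm) / (rMp - e - rp)) * B e)
                  = (rMp - e) / (rMp - e - rp) * sqrt ((rMm + e - rm) * (rMp - e - rp) * B e)).
  { rewrite <- (sqrt_pow2 _ Hk). rewrite <- sqrt_mult_alt by apply pow2_ge_0.
    f_equal. field. lra. }
  unfold mu2, mu1. rewrite Hsqrt.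
  unfold A_eps in HA |- *. unfold D_eps. field. split; [exact HA | lra].
Qed.

Lemma C_eps0_of_pressure_jumps (pM : R) :
  rm < rMm -> rp < rMp ->
  pM - pm = rm * rMm * vm ^ 2 / (rMm - rm) -> pM - pp = rMp * rp * vp ^ 2 / (rMp - rp) ->
  C_eps 0 = 0.
Proof.
  intros Ha Hb Hpm Hpp. unfold C_eps.
  replace (pm - pp) with ((pM - pp) - (pM - pm)) by ring.
  rewrite Hpm, Hpp. field. lra.
Qed.

Section Limits.
Variable emax : R.
Hypothesis Hemax : emax > 0.
Hypothesis Heps : forall e, 0 < e <= emax ->
  A e <> 0 /\ B e > 0 /\ rMp - e - rp > 0 /\ rMm + e - rm > 0.
Hypotheses (Hrm : 0 < rm) (Hrp : 0 < rp) (HrMm : rm < rMm) (HrMp : rp < rMp).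
Hypotheses (Hvm : 0 < vm) (Hvp : vp < 0).
Hypothesis HC0 : C_eps 0 = 0.

Lemma mu1_den0_pos : 0 < mu1_den 0.
Proof.
  unfold mu1_den, D_eps.
  pose proof (sqrt_pos ((rMm + 0 - rm) * (rMp - 0 - rp) * B 0)).
  assert (0 < vm * rm * (rMm + 0) * (rMp - 0 - rp))
    by (repeat apply Rmult_lt_0_compat; lra).
  assert (0 < - vp * rp * (rMp - 0) * (rMm + 0 - rm))
    by (repeat apply Rmult_lt_0_compat; lra).
  lra.
Qed.

Lemma mu1_den_continuous : continuous mu1_den 0.
Proof.
  unfold mu1_den.
  apply (continuous_plus D (fun e => sqrt ((rMm + e - rm) * (rMp - e - rp) * B e))).
  - unfold D_eps. continuous_by_auto_derive. exact I.
  - apply continuous_sqrt_comp.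
    unfold B_eps, A_eps. continuous_by_auto_derive. exact I.
Qed.

Lemma mu1_rat_continuous : continuous mu1_rat 0.
Proof.
  unfold mu1_rat.
  apply (continuous_mult C_eps (fun e => / mu1_den e)).
  - unfold C_eps. continuous_by_auto_derive. exact I.
  - apply continuous_Rinv_comp; [exact mu1_den_continuous|].
    apply Rgt_not_eq, mu1_den0_pos.
Qed.

Lemma mu1_eq_rat_near :
  at_right 0 (fun e => 0 < e <= emax /\ mu1_rat e = mu1 rm vm pm rp vp pp rMm rMp e).
Proof.
  assert (Hden : at_right 0 (fun e => 0 < mu1_den e)).
  { apply filter_le_within, continuous_pos_locally;
      [exact mu1_den_continuous | exact mu1_den0_pos]. }
  apply (filter_imp (fun e => (0 < e <= emax) /\ 0 < mu1_den e)).
  - intros e [He Hd]. split; [exact He|].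
    destruct (Heps e He) as (HA & HB & Hb & Ha).
    symmetry. apply mu1_eq_rat; [exact HA | | exact Hd].
    apply Rmult_le_pos; [apply Rmult_le_pos|]; lra.
  - exact (filter_and _ _ (at_right_le 0 emax Hemax) Hden).
Qed.

Lemma mu1_limit : filterlim (mu1 rm vm pm rp vp pp rMm rMp) (at_right 0) (locally 0).
Proof.
  apply (filterlim_at_right_continuous _ mu1_rat).
  - exact (filter_imp _ _ (fun e H => proj2 H) mu1_eq_rat_near).
  - exact mu1_rat_continuous.
  - unfold mu1_rat. rewrite HC0. unfold Rdiv. ring.
Qed.

Lemma mu0_limit :
  filterlim (mu0 rm vm pm rp vp pp rMm rMp) (at_right 0) (locally (- rm * vm / (rMm - rm))).
Proof.
  apply (filterlim_at_right_continuous _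
    (fun e => - rm * vm / (rMm + e - rm) + (rMm + e) / (rMm + e - rm) * mu1_rat e)).
  - eapply filter_imp; [|exact mu1_eq_rat_near]. intros e [He Hmu].
    destruct (Heps e He) as (HA & _ & _ & Ha).
    rewrite Hmu. symmetry. apply mu0_eq_mu1; [exact HA | lra | lra].
  - apply (continuous_plus (fun e => - rm * vm / (rMm + e - rm))
             (fun e => (rMm + e) / (rMm + e - rm) * mu1_rat e)).
    + continuous_by_auto_derive. lra.
    + apply (continuous_mult (fun e => (rMm + e) / (rMm + e - rm)) mu1_rat).
      * continuous_by_auto_derive. lra.
      * exact mu1_rat_continuous.
  - pose proof mu1_den0_pos. unfold mu1_rat. rewrite HC0. field. lra.
Qed.

Lemma mu2_limit :
  filterlim (mu2 rm vm pm rp vp pp rMm rMp) (at_right 0) (locally (- rp * vp / (rMp - rp))).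
Proof.
  apply (filterlim_at_right_continuous _
    (fun e => - rp * vp / (rMp - e - rp) + (rMp - e) / (rMp - e - rp) * mu1_rat e)).
  - eapply filter_imp; [|exact mu1_eq_rat_near]. intros e [He Hmu].
    destruct (Heps e He) as (HA & _ & Hb & _).
    rewrite Hmu. symmetry. apply mu2_eq_mu1; [exact HA | lra | lra].
  - apply (continuous_plus (fun e => - rp * vp / (rMp - e - rp))
             (fun e => (rMp - e) / (rMp - e - rp) * mu1_rat e)).
    + continuous_by_auto_derive. lra.
    + apply (continuous_mult (fun e => (rMp - e) / (rMp - e - rp)) mu1_rat).
      * continuous_by_auto_derive. lra.
      * exact mu1_rat_continuous.
  - pose proof mu1_den0_pos. unfold mu1_rat. rewrite HC0. field. lra.
Qed.

End Limits.
End Rationalization.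

Theorem proposition5p2
  (cv rm vm pm rp vp pp rMm rMp vM pM sm sp emax : R)
  (Hcv : cv > /2)
  (Hrm : rm > 0) (Hpm : pm > 0) (Hrp : rp > 0) (Hpp : pp > 0)
  (* 1-shock from (rho_-,v_-,p_-) to (rho_{M-},v_M,p_M) with speed sigma_- *)
  (H1 : admissible_1shock cv sm rm vm pm rMm vM pM)
  (* 3-shock from (rho_{M+},v_M,p_M) to (rho_+,v_+,p_+) with speed sigma_+ *)
  (H3 : admissible_3shock cv sp rMp vM pM rp vp pp)
  (HpM : pM > Rmax pm pp) (HrMm : rMm > rm) (HrMp : rMp > rp)
  (HvM : vM = 0)
  (Hemax : emax > 0)
  (Heps : forall e, 0 < e <= emax ->
     A_eps rm rp rMm rMp e <> 0 /\
     B_eps rm vm pm rp vp pp rMm rMp e > 0 /\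
     rMp - e - rp > 0 /\ rMm + e - rm > 0) :
  filterlim (mu0 rm vm pm rp vp pp rMm rMp) (at_right 0) (locally sm) /\
  filterlim (mu1 rm vm pm rp vp pp rMm rMp) (at_right 0) (locally vM) /\
  filterlim (mu2 rm vm pm rp vp pp rMm rMp) (at_right 0) (locally sp).
Proof.
  subst vM.
  destruct (admissible_1shock_to_rest cv sm rm vm pm rMm pM (conj Hrm HrMm) H1)
    as (Hvm & Hsm & HpMm).
  destruct (admissible_3shock_from_rest cv sp rMp pM rp vp pp (conj Hrp HrMp) H3)
    as (Hvp & Hsp & HpMp).
  assert (HC0 : C_eps rm vm pm rp vp pp rMm rMp 0 = 0)
    by exact (C_eps0_of_pressure_jumps rm vm pm rp vp pp rMm rMp pM HrMm HrMp HpMm HpMp).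
  rewrite Hsm, Hsp.
  split; [|split];
    [apply (mu0_limit _ _ _ _ _ _ _ _ emax) | apply (mu1_limit _ _ _ _ _ _ _ _ emax)
    | apply (mu2_limit _ _ _ _ _ _ _ _ emax)]; assumption.
Qed.
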